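(* Let $\mathcal{G}_\mu=(\mathcal{V}_\mu,\mathcal{E}_\mu)$ be a connected undirected graph on the finite node set $\mathcal{V}_\mu=\{1,\dots,V_\mu\}$ (each node is a distributed generator, DG), with symmetric binary adjacency matrix $\mathcal{A}_\mu=[a_{ij}]$ ($a_{ii}=0$, $a_{ij}=a_{ji}=1$ iff $(i,j)\in\mathcal{E}_\mu$). For $i\in\mathcal{V}_\mu$ let $\mathcal{E}_{\mu,i}$ be the set of edges incident to $i$, so $|\mathcal{E}_{\mu,i}|$ is the degree of node $i$. Fix reference values $x_{\omega,ref},x_{U,ref}\in\mathbb{R}$ and control gains $K_{\omega i},K_{Pi},K_{Ui}>0$. Consider the discrete-time system, for $k\ge 0$ and each $i\in\mathcal{V}_\mu$, \[ x_{\omega i}(k+1)=x_{\omega i}(k)+u_{\omega i}(k),\quad x_{Pi}(k+1)=x_{Pi}(k)+u_{Pi}(k),\quad x_{Ui}(k+1)=x_{Ui}(k)+u_{Ui}(k), \] with the controls \[ u_{\omega i}(k)=K_{\omega i}\big(x_{\omega,ref}-x_{\omega i}(k)\big),\qquad u_{Pi}(k)=K_{Pi}\sum_{j:(i,j)\in\mathcal{E}_{\mu}} a_{ij}\big(x_{Pj}(k-1)-x_{Pi}(k)\big),\qquad u_{Ui}(k)=K_{Ui}\big(x_{U,ref}-x_{Ui}(k)\big), \] and arbitrary initial values (including $x_P(-1)$). Here $x_{\omega i}=\omega_i$ is the angular frequency of DG $i$, $x_{Pi}=m_{Pi}P_i$ its droop-scaled active power output, and $x_{Ui}=U_i$ its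 voltage magnitude, where the droop coefficients satisfy $m_{Pi}P_{\max,i}=m_{Pj}P_{\max,j}$ for all $i,j$, with $P_{\max,i}>0$ the active power rating of DG $i$. If \[ 0<K_{\omega i}<2,\quad 0<K_{Ui}<2,\quad 0<|\mathcal{E}_{\mu,i}|\,K_{Pi}<1\qquad\text{for all } i\in\mathcal{V}_\mu, \] then, as $k\to\infty$, $\omega_i(k)\to x_{\omega,ref}$, $U_i(k)\to x_{U,ref}$, and $\big|P_i(k)/P_{\max,i}-P_j(k)/P_{\max,j}\big|\to 0$ (equivalently $|x_{Pi}(k)-x_{Pj}(k)|\to0$) for all $i,j\in\mathcal{V}_\mu$; i.e., frequency regulation, active power sharing and voltage regulation are achieved asymptotically.
   Context: This models distributed secondary control of an islanded microgrid in which each DG runs droop control $\omega_i=\omega_{ni}-m_{Pi}P_i$, $U_i=U_{ni}-n_{Qi}Q_i$, and the set points are updated every sampling interval $T_s$ chosen no smaller than the maximal communication delay, so that neighbours' power information arrives with exactly one step of delay (the term $x_{Pj}(k-1)$). The delayed neighbour exchange takes place over the undirected communication graph $\mathcal{G}_\mu$. *)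

From HB Require Import structures.
From mathcomp Require Import all_boot all_order all_algebra.
From mathcomp Require Import all_classical all_reals all_analysis.
Set Implicit Arguments. Unset Strict Implicit. Unset Printing Implicit Defensive.
Import Order.TTheory GRing.Theory Num.Theory.
Local Open Scope ring_scope.

(* The communication graph G_mu on node set 'I_n, given by its edge relation
   e (e i j <-> a_ij = 1). *)
Definition undirected_graph (n : nat) (e : rel 'I_n) : Prop :=
  symmetric e /\ irreflexive e.

Definition connected_graph (n : nat) (e : rel 'I_n) : Prop :=
  forall i j : 'I_n, connect e i j.

Definition degree (n : nat) (e : rel 'I_n) (i : 'I_n) : nat :=
  #|[pred j | e i j]|.

(* Delayed power value: x_P(k-1), where xPm1 is the initial value x_P(-1)
   and xP k is x_P(k) for k >= 0. *)
Definition xP_prev (R : Type) (n : nat) (xPm1 : 'I_n -> R)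
  (xP : nat -> 'I_n -> R) (k : nat) : 'I_n -> R :=
  match k with
  | 0 => xPm1
  | k'.+1 => xP k'
  end.

From HB Require Import structures.
From mathcomp Require Import all_boot all_order all_algebra.
From mathcomp Require Import all_classical all_reals all_analysis.
From mathcomp Require Import zify ring lra.
Import Order.TTheory GRing.Theory Num.Theory.
Import numFieldNormedType.Exports.
Local Open Scope classical_set_scope.
Local Open Scope ring_scope.
Set Implicit Arguments. Unset Strict Implicit. Unset Printing Implicit Defensive.

(* Frequency and voltage are scalar relaxations: x(k) - r = (1 - K)^k (x(0) - r)
   with |1 - K| < 1.  For the powers, z(t) := x_P(t - 1) obeys
   z_i(t+2) = a_i z_i(t+1) + b_i sum_{j ~ i} z_j(t) with positive weights
   a_i = 1 - d_i K_Pi and b_i = K_Pi summing to one: an averaging iteration on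
   the window (z(t), z(t+1)).  Hence a window inside [m, M] stays inside, and
   along a shortest path the value of z - m (or M - z) at one node bounds it
   from below at every node 2n steps later, up to the factor q = α^(2n), where
   α is the smallest weight.  Using whichever of z - m, M - z is at least
   (M - m)/2 at a fixed node, the window range shrinks by 1 - q/2 every 2n
   steps, which gives consensus.  Power sharing follows since
   P_i / Pmax_i = x_Pi / (m_Pi Pmax_i) and these denominators coincide. *)

Lemma relaxation_cvg (R : realType) (x : nat -> R) (r K : R) :
  0 < K < 2 -> (forall k, x k.+1 = x k + K * (r - x k)) -> x @ \oo --> r.
Proof.
move=> /andP[K_gt0 K_lt2] x_step.
have x_closed k : x k = r + (1 - K) ^+ k * (x 0%N - r).
  elim: k => [|k IH]; first by rewrite expr0 mul1r addrC subrK.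
  by rewrite x_step IH exprS; ring.
have ratio_lt1 : `|1 - K| < 1 by rewrite ltr_norml; apply/andP; split; lra.
rewrite (funext x_closed) -[X in _ --> X]addr0 -(mul0r (x 0%N - r)).
apply: cvgD; first exact: cvg_cst.
by apply: cvgM; [exact: cvg_expr | exact: cvg_cst].
Qed.

Section DelayedAveraging.
Variables (R : realType) (n : nat) (e : rel 'I_n) (a b : 'I_n -> R).
Hypotheses (e_sym : symmetric e) (e_conn : connected_graph e).
Hypotheses (a_gt0 : forall i, 0 < a i) (b_gt0 : forall i, 0 < b i).
Hypothesis ab_stochastic : forall i, a i + (degree e i)%:R * b i = 1.

Let a_ge0 i : 0 <= a i. Proof. exact: ltW. Qed.
Let b_ge0 i : 0 <= b i. Proof. exact: ltW. Qed.

Definition delayed_avg (z : nat -> 'I_n -> R) :=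
  forall t i, z t.+2 i = a i * z t.+1 i + b i * \sum_(j | e i j) z t j.

Lemma sum_neighbours_const i (c : R) : \sum_(j | e i j) c = (degree e i)%:R * c.
Proof. by rewrite (eq_bigl [in [pred j | e i j]]) // sumr_const mulr_natl. Qed.

Lemma delayed_avg_affine z c s :
  delayed_avg z -> delayed_avg (fun t i => c + s * z t i).
Proof.
move=> z_avg t i; rewrite z_avg big_split /= sum_neighbours_const -mulr_sumr.
have := ab_stochastic i; set d := (degree e i)%:R => ab1.
have -> : a i = 1 - d * b i by rewrite -ab1 addrK.
ring.
Qed.

Definition window_ge (z : nat -> 'I_n -> R) t m :=
  forall i, m <= z t i /\ m <= z t.+1 i.
Local Notation window_ge0 z t := (window_ge z t 0).

Lemma neighbour_sum_ge0 z t i :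
  window_ge0 z t -> 0 <= \sum_(j | e i j) z t j.
Proof. by move=> z_ge0; apply: sumr_ge0 => j _; case: (z_ge0 j). Qed.

Lemma window_ge0S z t : delayed_avg z -> window_ge0 z t -> window_ge0 z t.+1.
Proof.
move=> z_avg z_ge0 i; have [_ zi_ge0] := z_ge0 i; split => //.
by rewrite z_avg addr_ge0 // mulr_ge0 ?a_ge0 ?b_ge0 ?neighbour_sum_ge0.
Qed.

Lemma window_ge0D z t s : delayed_avg z -> window_ge0 z t -> window_ge0 z (t + s)%N.
Proof.
move=> z_avg z_ge0; elim: s => [|s IH]; first by rewrite addn0.
by rewrite addnS; apply: window_ge0S.
Qed.

Definition min_weight := \big[Order.min/1]_(i < n) Order.min (a i) (b i).
Local Notation al := min_weight.

Lemma min_weight_gt0 : 0 < al.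
Proof.
apply: (big_ind (fun x => 0 < x)) => // [x y|i _]; first by rewrite lt_min => ->.
by rewrite lt_min a_gt0 b_gt0.
Qed.

Lemma min_weight_le1 : al <= 1.
Proof.
apply: (big_ind (fun x => x <= 1)) => // [x y|i _]; first by rewrite ge_min => ->.
by rewrite ge_min -(ab_stochastic i) lerDl mulr_ge0 ?b_ge0.
Qed.

Lemma min_weight_expn_gt0 k : 0 < al ^+ k.
Proof. exact/exprn_gt0/min_weight_gt0. Qed.

Lemma min_weight_expn_le k l : (k <= l)%N -> al ^+ l <= al ^+ k.
Proof. by apply: ler_wiXn2l; [exact: ltW min_weight_gt0 | exact: min_weight_le1]. Qed.

Lemma min_weight_expn_le1 k : al ^+ k <= 1.
Proof. by rewrite -(expr0 al) min_weight_expn_le. Qed.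

Lemma min_weight_le_a i : al <= a i.
Proof. by rewrite /min_weight (bigD1 i) //= !ge_min lexx. Qed.

Lemma min_weight_le_b i : al <= b i.
Proof. by rewrite /min_weight (bigD1 i) //= !ge_min lexx orbT. Qed.

Lemma delayed_avg_ge_self z t i :
  delayed_avg z -> window_ge0 z t -> al * z t.+1 i <= z t.+2 i.
Proof.
move=> z_avg z_ge0; have [_ zi_ge0] := z_ge0 i.
rewrite z_avg (le_trans (ler_wpM2r zi_ge0 (min_weight_le_a i))) // lerDl.
by rewrite mulr_ge0 ?b_ge0 ?neighbour_sum_ge0.
Qed.

Lemma delayed_avg_ge_neighbour z t i j :
  delayed_avg z -> window_ge0 z t -> e i j -> al * z t j <= z t.+2 i.
Proof.
move=> z_avg z_ge0 eij; have [zj_ge0 _] := z_ge0 j; have [_ zi_ge0] := z_ge0 i.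
rewrite z_avg ler_wpDl ?mulr_ge0 ?a_ge0 //.
apply: le_trans (ler_wpM2r zj_ge0 (min_weight_le_b i)) _.
rewrite ler_wpM2l ?b_ge0 // (bigD1 j) //= lerDl.
by apply: sumr_ge0 => k _; case: (z_ge0 k).
Qed.

Lemma delayed_avg_ge_delay z t j s :
  delayed_avg z -> window_ge0 z t -> al ^+ s * z t.+1 j <= z (t.+1 + s)%N j.
Proof.
move=> z_avg z_ge0; elim: s => [|s IH]; first by rewrite expr0 mul1r addn0.
rewrite exprS -mulrA addnS addSn.
apply: le_trans (ler_wpM2l (ltW min_weight_gt0) IH) _.
by rewrite -addSn; apply: delayed_avg_ge_self; last exact: window_ge0D.
Qed.

Lemma delayed_avg_ge_path z : delayed_avg z -> forall p j0 t,
  path e j0 p -> window_ge0 z t ->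
  al ^+ size p * z t.+1 j0 <= z (t.+1 + 2 * size p)%N (last j0 p).
Proof.
move=> z_avg; elim=> [|j1 p IH] j0 t /=; first by rewrite expr0 mul1r addn0.
move=> /andP[e01 p_path] z_ge0.
have z1_ge0 : window_ge0 z t.+1 by apply: window_ge0S.
have step : al * z t.+1 j0 <= z t.+3 j1.
  by apply: delayed_avg_ge_neighbour; rewrite // e_sym.
have -> : (t.+1 + 2 * (size p).+1 = t.+3 + 2 * size p)%N by lia.
rewrite exprSr -mulrA; apply: le_trans (IH _ _ p_path (window_ge0S z_avg z1_ge0)).
by rewrite ler_wpM2l // ltW // min_weight_expn_gt0.
Qed.

Lemma delayed_avg_ge_connect z t i0 j s : delayed_avg z -> window_ge0 z t ->
  (2 * n.-1 <= s)%N -> al ^+ s * z t.+1 i0 <= z (t.+1 + s)%N j.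
Proof.
move=> z_avg z_ge0 s_ge.
have /connectP[p0 p0_path ->] := e_conn i0 j.
have [p p_path p_uniq _] := shortenP p0_path.
have size_p : (size p < n)%N.
  by move: (max_card (mem (i0 :: p))); rewrite (card_uniqP p_uniq) card_ord.
have -> : s = (2 * size p + (s - 2 * size p))%N by lia.
have path_bound := delayed_avg_ge_path z_avg p_path z_ge0.
have delay_bound := delayed_avg_ge_delay (last i0 p) (s - 2 * size p)
  z_avg (window_ge0D (2 * size p) z_avg z_ge0).
rewrite addSn in path_bound; rewrite addnA addSn.
apply: le_trans delay_bound.
rewrite exprD [_ ^+ _ * _]mulrC -mulrA ler_wpM2l ?(ltW (min_weight_expn_gt0 _)) //.
have [_ zi0_ge0] := z_ge0 i0.
apply: le_trans path_bound; apply: ler_wpM2r => //.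
by apply: min_weight_expn_le; rewrite leq_pmull.
Qed.

Lemma delayed_avg_spread z t i0 : delayed_avg z -> window_ge0 z t ->
  window_ge z (t + 2 * n)%N (al ^+ (2 * n) * z t.+1 i0).
Proof.
move=> z_avg z_ge0 j; have n_gt0 : (0 < n)%N by have := ltn_ord i0; lia.
have [_ zi0_ge0] := z_ge0 i0.
split; last by rewrite -addSn; apply: delayed_avg_ge_connect => //; lia.
have -> : (t + 2 * n = t.+1 + (2 * n).-1)%N by lia.
apply: le_trans (delayed_avg_ge_connect i0 j z_avg z_ge0 _); last by lia.
by apply: ler_wpM2r => //; exact/min_weight_expn_le/leq_pred.
Qed.

Definition window_in (z : nat -> 'I_n -> R) t m M :=
  forall i, m <= z t i <= M /\ m <= z t.+1 i <= M.

Lemma window_in_ge0 z t m M : window_in z t m M <->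
  window_ge0 (fun t i => - m + 1 * z t i) t /\
  window_ge0 (fun t i => M + -1 * z t i) t.
Proof.
split=> [w | [lo hi] i].
  by split=> i; have [/andP[? ?] /andP[? ?]] := w i; split; lra.
by have [? ?] := lo i; have [? ?] := hi i; split; apply/andP; split; lra.
Qed.

Lemma window_inD z t m M s :
  delayed_avg z -> window_in z t m M -> window_in z (t + s)%N m M.
Proof.
move=> z_avg /window_in_ge0[lo hi]; apply/window_in_ge0; split.
  exact: window_ge0D (delayed_avg_affine _ _ z_avg) lo.
exact: window_ge0D (delayed_avg_affine _ _ z_avg) hi.
Qed.

Local Notation q := (al ^+ (2 * n)).

Lemma window_in_raise z t m M i0 : delayed_avg z -> window_in z t m M ->
  window_in z (t + 2 * n)%N (m + q * (z t.+1 i0 - m)) M.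
Proof.
move=> z_avg w; have [lo _] := (window_in_ge0 z t m M).1 w.
have lo' := delayed_avg_spread i0 (delayed_avg_affine (- m) 1 z_avg) lo.
have w' := window_inD (2 * n) z_avg w.
move=> j; have [/andP[? ?] /andP[? ?]] := w' j; have [/= ? ?] := lo' j.
by split; apply/andP; split; lra.
Qed.

Lemma window_in_lower z t m M i0 : delayed_avg z -> window_in z t m M ->
  window_in z (t + 2 * n)%N m (M - q * (M - z t.+1 i0)).
Proof.
move=> z_avg w; have [_ hi] := (window_in_ge0 z t m M).1 w.
have hi' := delayed_avg_spread i0 (delayed_avg_affine M (-1) z_avg) hi.
have w' := window_inD (2 * n) z_avg w.
move=> j; have [/andP[? ?] /andP[? ?]] := w' j; have [/= ? ?] := hi' j.
by split; apply/andP; split; lra.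
Qed.

Lemma window_in_contract z t m M (i0 : 'I_n) : delayed_avg z -> window_in z t m M ->
  exists m' M', window_in z (t + 2 * n)%N m' M' /\
    M' - m' <= (1 - q / 2) * (M - m).
Proof.
move=> z_avg w; have q_ge0 := ltW (min_weight_expn_gt0 (2 * n)).
have [_ /andP[m_le M_ge]] := w i0.
have [mid_le | mid_gt] := lerP ((M + m) / 2) (z t.+1 i0).
  exists (m + q * (z t.+1 i0 - m)), M; split; first exact: window_in_raise.
  have : q * ((M - m) / 2) <= q * (z t.+1 i0 - m) by rewrite ler_wpM2l //; lra.
  lra.
exists m, (M - q * (M - z t.+1 i0)); split; first exact: window_in_lower.
have : q * ((M - m) / 2) <= q * (M - z t.+1 i0) by rewrite ler_wpM2l //; lra.
lra.
Qed.

Lemma window_in_contract_iter z m0 M0 (i0 : 'I_n) :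
  delayed_avg z -> window_in z 0 m0 M0 -> forall N, exists m M,
    window_in z (N * (2 * n))%N m M /\ M - m <= (1 - q / 2) ^+ N * (M0 - m0).
Proof.
move=> z_avg w0; elim=> [|N [m [M [w rng]]]].
  by exists m0, M0; rewrite expr0 mul1r.
have [m' [M' [w' rng']]] := window_in_contract i0 z_avg w.
exists m', M'; rewrite mulSn addnC; split => //.
apply: le_trans rng' _; rewrite exprS -mulrA ler_wpM2l //.
by have := min_weight_expn_le1 (2 * n); lra.
Qed.

Lemma window_in_bounded z : exists m M, window_in z 0 m M.
Proof.
set B := \sum_i (`|z 0%N i| + `|z 1%N i|).
exists (- B), B => i; rewrite -!ler_norml.
have : `|z 0%N i| + `|z 1%N i| <= B by rewrite /B (bigD1 i) //= lerDl sumr_ge0.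
have := normr_ge0 (z 0%N i); have := normr_ge0 (z 1%N i).
by move=> *; split; lra.
Qed.

Lemma window_range_vanishes z (i0 : 'I_n) : delayed_avg z ->
  forall eps, 0 < eps -> exists t m M, window_in z t m M /\ M - m < eps.
Proof.
move=> z_avg eps eps_gt0; have [m0 [M0 w0]] := window_in_bounded z.
have ratio_lt1 : `|1 - q / 2| < 1.
  have := min_weight_expn_gt0 (2 * n); have := min_weight_expn_le1 (2 * n).
  by move=> *; rewrite ltr_norml; apply/andP; split; lra.
have : (1 - q / 2) ^+ N * (M0 - m0) @[N --> \oo] --> 0.
  by rewrite -(mul0r (M0 - m0)); apply: cvgM; [exact: cvg_expr | exact: cvg_cst].
move=> /cvgr_lt /(_ _ eps_gt0)[N _ small].
have [m [M [w rng]]] := window_in_contract_iter i0 z_avg w0 N.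
exists (N * (2 * n))%N, m, M; split => //.
exact: le_lt_trans rng (small N (leqnn N)).
Qed.

Lemma delayed_avg_consensus z : delayed_avg z ->
  forall i j, (fun k => `|z k i - z k j|) @ \oo --> 0.
Proof.
move=> z_avg i j; apply/cvgr0Pnorm_lt => eps eps_gt0.
have [t0 [m [M [w rng]]]] := window_range_vanishes i z_avg eps_gt0.
exists t0 => // k /= t0_le_k.
have := window_inD (k - t0) z_avg w; rewrite subnKC // => wk.
have [/andP[? ?] _] := wk i; have [/andP[? ?] _] := wk j.
by rewrite normr_id; apply: le_lt_trans rng; rewrite ler_norml; apply/andP; split; lra.
Qed.

End DelayedAveraging.

Theorem theorem1 (R : realType) (n : nat) (e : rel 'I_n)
  (xwref xUref : R) (Kw KP KU : 'I_n -> R)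
  (mP Pmax : 'I_n -> R)
  (xw xP xU : nat -> 'I_n -> R) (xPm1 : 'I_n -> R) (P : nat -> 'I_n -> R) :
  undirected_graph e -> connected_graph e ->
  (forall i, 0 < mP i) -> (forall i, 0 < Pmax i) ->
  (forall i j, mP i * Pmax i = mP j * Pmax j) ->
  (forall k i, xP k i = mP i * P k i) ->
  (forall i, 0 < Kw i < 2) -> (forall i, 0 < KU i < 2) ->
  (forall i, 0 < (degree e i)%:R * KP i < 1) ->
  (forall k i, xw k.+1 i = xw k i + Kw i * (xwref - xw k i)) ->
  (forall k i, xP k.+1 i =
     xP k i + KP i * \sum_(j | e i j) (xP_prev xPm1 xP k j - xP k i)) ->
  (forall k i, xU k.+1 i = xU k i + KU i * (xUref - xU k i)) ->
  (forall i, (fun k => xw k i) @ \oo --> xwref) /\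
  (forall i, (fun k => xU k i) @ \oo --> xUref) /\
  (forall i j, (fun k => `|P k i / Pmax i - P k j / Pmax j|) @ \oo --> 0) /\
  (forall i j, (fun k => `|xP k i - xP k j|) @ \oo --> 0).
Proof.
move=> [e_sym _] e_conn mP_gt0 Pmax_gt0 rating xP_droop Kw_range KU_range KP_range
  xw_step xP_step xU_step.
have KP_gt0 i : 0 < KP i.
  have /andP[dKP_gt0 _] := KP_range i; move: dKP_gt0.
  by case: (degree e i) => [|d]; rewrite ?mul0r ?ltxx // pmulr_rgt0 ?ltr0Sn.
have a_gt0 i : 0 < 1 - (degree e i)%:R * KP i.
  by have /andP[_ ?] := KP_range i; lra.
have xP_avg : delayed_avg e (fun i => 1 - (degree e i)%:R * KP i) KP
    (xP_prev xPm1 xP).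
  by move=> t i; rewrite /= xP_step sumrB sum_neighbours_const; ring.
have sharing i j : (fun k => `|xP k i - xP k j|) @ \oo --> 0.
  have := delayed_avg_consensus e_sym e_conn a_gt0 KP_gt0 (fun l => subrK _ _) xP_avg i j.
  by rewrite -cvg_shiftS.
split; first by move=> i; apply: (relaxation_cvg (Kw_range i)).
split; first by move=> i; apply: (relaxation_cvg (KU_range i)).
split=> // i j.
have ratio k l : P k l / Pmax l = xP k l / (mP l * Pmax l).
  by rewrite xP_droop -mulf_div divff ?mul1r // lt0r_neq0.
have -> : (fun k => `|P k i / Pmax i - P k j / Pmax j|) =
    (fun k => `|xP k i - xP k j| * (mP i * Pmax i)^-1).
  apply: funext => k; rewrite !ratio -(rating i j) -mulrBl normrM.
  by rewrite [`|_^-1|]ger0_norm // invr_ge0 ltW // mulr_gt0.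
by rewrite -(mul0r (mP i * Pmax i)^-1); apply: cvgM => //; exact: cvg_cst.
Qed.
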